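(* For every graph $G$ with exactly $\ell$ vertices of degree $1$, $\mathrm{sp}(G)\ge \lceil 2(\ell-1)/3\rceil$.
   Context: A family of subsets $V_1,\dots,V_k$ of a set $V$ is a separating system of $V$ if for every two distinct $u,v\in V$ there is $i$ with $|V_i\cap\{u,v\}|=1$. For a graph $G$, $\mathrm{sp}(G)$ is the minimum size of a family $\mathcal P$ of paths in $G$ (single-vertex paths allowed) such that $\{V(P):P\in\mathcal P\}$ is a separating system of $V(G)$. *)

(* A finite simple graph on a finType T is a symmetric,
   irreflexive relation e : rel T. *)
From mathcomp Require Import all_boot.
Set Implicit Arguments. Unset Strict Implicit. Unset Printing Implicit Defensive.

Section Graphs.
Variable T : finType.
Variable e : rel T.

Definition deg (u : T) : nat := #|[set v | e u v]|.

Definition num_leaves : nat := #|[set u | deg u == 1]|.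

Definition is_gpath (p : seq T) : bool :=
  if p is x :: q then path e x q && uniq p else false.

Definition separating (F : seq (seq T)) : Prop :=
  forall u v : T, u != v -> exists2 P, P \in F & (u \in P) != (v \in P).

Definition sep_path_system (F : seq (seq T)) : Prop :=
  all is_gpath F /\ separating F.
End Graphs.

From mathcomp Require Import all_boot zify.

Set Implicit Arguments.
Unset Strict Implicit.
Unset Printing Implicit Defensive.

(* Let c(x) be the number of paths of the system that contain the leaf x.
   A leaf can only be an endpoint of a path, so every path contains at most
   two leaves and the c(x) sum to at most 2|F|.  Separation allows at most
   one vertex with c(x) = 0, and vertices with c(x) = 1 lie in pairwise
   distinct paths, so there are at most |F| of them.  Since
   2 <= c + 2[c = 0] + [c = 1] pointwise, summing over the leaves gives
   2l <= 2|F| + 2 + |F|. *)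

Lemma sum_nat_bool (T : finType) (P b : pred T) :
  \sum_(x | P x) (b x : nat) = #|[set x | P x & b x]|.
Proof.
rewrite -sum1dep_card big_mkcondr /=.
by apply: eq_bigr => x _; case: (b x).
Qed.

Lemma count_eq1_eq (S : eqType) (a : pred S) (s : seq S) (x y : S) :
  count a s = 1 -> x \in s -> y \in s -> a x -> a y -> x = y.
Proof.
rewrite -size_filter => s1 xs ys ax ay.
have: x \in filter a s by rewrite mem_filter ax xs.
have: y \in filter a s by rewrite mem_filter ay ys.
by case: (filter a s) s1 => [|z []] //= _; rewrite !inE => /eqP -> /eqP ->.
Qed.

Definition cover_count (T : eqType) (F : seq (seq T)) (x : T) : nat :=
  count (fun P => x \in P) F.

Lemma cover_count_gt0 (T : eqType) (F : seq (seq T)) (x : T) (P : seq T) :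
  P \in F -> x \in P -> 0 < cover_count F x.
Proof. by move=> PF xP; rewrite -has_count; apply/hasP; exists P. Qed.

Section SeparatingSystem.

Variables (T : finType) (F : seq (seq T)).
Hypothesis sepF : separating F.

Lemma card_uncovered_le1 : #|[set x | cover_count F x == 0]| <= 1.
Proof.
rewrite leqNgt; apply/card_gt1P => -[x [y [+ + xy]]]; rewrite !inE => /eqP cx /eqP cy.
have [P PF] := sepF xy.
case xP: (x \in P); case yP: (y \in P) => //= _.
  by have := cover_count_gt0 PF xP; rewrite cx.
by have := cover_count_gt0 PF yP; rewrite cy.
Qed.

Lemma card_covered_once_le : #|[set x | cover_count F x == 1]| <= size F.
Proof.
set A := [set x | cover_count F x == 1].
pose home x := nth [::] F (find (fun P => x \in P) F).
have homeP x : x \in A -> home x \in F /\ x \in home x.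
  rewrite inE => /eqP cx.
  have hasx : has (fun P => x \in P) F by rewrite has_count -/(cover_count F x) cx.
  by split; [rewrite mem_nth // -has_find | exact: nth_find hasx].
have home_inj : {in A &, injective home}.
  move=> x y xA yA hxy; apply/eqP/negPn/negP => /sepF [Q QF].
  have [[PF xP] [_ yP]] := (homeP x xA, homeP y yA).
  rewrite hxy in PF xP; move: xA yA; rewrite !inE => /eqP cx /eqP cy.
  case xQ: (x \in Q); case yQ: (y \in Q) => //= _.
    by move: yQ; rewrite -(count_eq1_eq cx PF QF xP xQ) yP.
  by move: xQ; rewrite -(count_eq1_eq cy PF QF yP yQ) xP.
rewrite cardE -(size_map home); apply: uniq_leq_size.
  by rewrite map_inj_in_uniq ?enum_uniq // => x y; rewrite !mem_enum; apply: home_inj.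
by move=> P /mapP [x]; rewrite mem_enum => /homeP [PF _] ->.
Qed.

End SeparatingSystem.

Section LeavesOnPaths.

Variables (T : finType) (e : rel T).
Hypothesis e_sym : symmetric e.

Lemma gpath_leaf_endpoint (P : seq T) (x : T) :
  is_gpath e P -> deg e x = 1 -> x \in P -> (x == head x P) || (x == last x P).
Proof.
case: P => [|x0 q] //= /andP [pq uq] dx; rewrite inE; case: eqP => //= _ xq.
case/splitPr: xq pq uq => q1 q2; rewrite cat_path last_cat => /andP [_ /= /andP [wx]].
case: q2 => [|y q2] /=; first by rewrite eqxx.
case/andP => xy _ uq; exfalso.
set w := last x0 q1 in wx *.
have wy : w != y.
  have wq1 : w \in x0 :: q1 by apply: mem_last.
  have: uniq ((x0 :: q1) ++ [:: x, y & q2]) := uq.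
  rewrite cat_uniq => /and3P [_ /hasP nocommon _].
  by apply/eqP => wy; apply: nocommon; exists y; rewrite ?inE ?eqxx ?orbT // -wy.
have: #|[set w; y]| <= deg e x.
  by apply/subset_leq_card/subsetP => v; rewrite !inE => /orP [] /eqP ->; rewrite // e_sym.
by rewrite cards2 wy dx.
Qed.

Lemma card_gpath_leaves_le2 (P : seq T) :
  is_gpath e P -> #|[set x | deg e x == 1 & x \in P]| <= 2.
Proof.
case: P => [|x0 q] // pathP.
apply: leq_trans (_ : #|[set x0; last x0 q]| <= 2); last by rewrite cards2; case: (_ != _).
apply/subset_leq_card/subsetP => x; rewrite !inE => /andP [/eqP dx xP].
exact: gpath_leaf_endpoint pathP dx xP.
Qed.

Lemma sum_leaf_cover_count_le (F : seq (seq T)) :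
  all (is_gpath e) F -> \sum_(x | deg e x == 1) cover_count F x <= 2 * size F.
Proof.
elim: F => [|P F IH] /=; first by rewrite big1.
case/andP => pathP pathsF; rewrite big_split /= sum_nat_bool mulnS.
by rewrite leq_add ?card_gpath_leaves_le2 ?IH.
Qed.

End LeavesOnPaths.

Theorem lemma2p4 (T : finType) (e : rel T)
    (e_sym : symmetric e) (e_irr : irreflexive e) (l : nat) :
  num_leaves e = l ->
  forall F : seq (seq T), sep_path_system e F ->
  (2 * (l - 1) + 2) %/ 3 <= size F.
Proof.
rewrite /num_leaves => <- F [pathsF sepF].
set c := cover_count F.
have restrict (p : pred nat) :
    #|[set x | deg e x == 1 & p (c x)]| <= #|[set x | p (c x)]|.
  by apply/subset_leq_card/subsetP => x; rewrite !inE => /andP [].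
have pointwise : 2 * #|[set x | deg e x == 1]| <=
    \sum_(x | deg e x == 1) c x + 2 * #|[set x | deg e x == 1 & c x == 0]|
    + #|[set x | deg e x == 1 & c x == 1]|.
  rewrite -!sum_nat_bool mulnC -sum_nat_cond_const big_distrr -!big_split /=.
  by apply: leq_sum => x _; case: (c x) => [|[|n]].
have sum_le : \sum_(x | deg e x == 1) c x <= 2 * size F :=
  sum_leaf_cover_count_le e_sym pathsF.
have zero_le : #|[set x | deg e x == 1 & c x == 0]| <= 1 :=
  leq_trans (restrict (pred1 0)) (card_uncovered_le1 sepF).
have once_le : #|[set x | deg e x == 1 & c x == 1]| <= size F :=
  leq_trans (restrict (pred1 1)) (card_covered_once_le sepF).
rewrite -ltnS ltn_divLR //; lia.
Qed.
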